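(* Let $N\geq 3$ and let $|G\rangle=\frac{1}{\sqrt2}(|0\cdots0\rangle+|1\cdots1\rangle)$ be the $N$-qubit GHZ state and $|\psi_+\rangle=\frac1{\sqrt2}(|00\rangle+|11\rangle)$. Let the measurement settings $X_j,X_j'$ ($j=1,\dots,N$) be as in the context, satisfying the non-degeneracy assumptions (ND), and let $A_a,B_b$ ($a,b\in\{0,1\}$) be the associated two-qubit settings defined in the context. Put $$\langle I^N_{CHSH}\rangle=\sum_{a,b\in\{0,1\}}(-1)^{ab}\langle G|\mathbb A_a\otimes\mathbb B_b|G\rangle,\qquad \langle I^2_{CHSH}\rangle=\sum_{a,b\in\{0,1\}}(-1)^{ab}\langle \psi_+|A_a\otimes B_b|\psi_+\rangle.$$ If $\langle I^N_{CHSH}\rangle>2$ then $\langle I^2_{CHSH}\rangle\geq \langle I^N_{CHSH}\rangle$; and if $\langle I^N_{CHSH}\rangle<-2$ then $\langle I^2_{CHSH}\rangle\leq \langle I^N_{CHSH}\rangle$. In particular, violation of the CHSH inequality $|\langle I^2_{CHSH}\rangle|\le 2$ by $|\psi_+\rangle$ is necessary for violation of $|\langle I^N_{CHSH}\rangle|\le 2$ by $|G\rangle$.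
   Context: $\sigma_x,\sigma_y,\sigma_z$ are the Pauli matrices, $\vec\sigma=(\sigma_x,\sigma_y,\sigma_z)$. For $j=1,\dots,N$, single-qubit observables $X_j=\vec n_j\cdot\vec\sigma$, $X_j'=\vec n_j'\cdot\vec\sigma$ with $\vec n_j=(\sin\alpha_j\cos\varphi_j,\sin\alpha_j\sin\varphi_j,\cos\alpha_j)$, $\vec n_j'=(\sin\alpha_j'\cos\varphi_j',\sin\alpha_j'\sin\varphi_j',\cos\alpha_j')$, $\alpha_j,\alpha_j'\in[0,\pi]$, $\varphi_j,\varphi_j'\in\mathbb R$. Define $\mathbb A_0=\bigotimes_{j=1}^{N-1}X_j$, $\mathbb A_1=\bigotimes_{j=1}^{N-1}X_j'$ (acting on qubits $1,\dots,N-1$), $\mathbb B_0=X_N$, $\mathbb B_1=X_N'$ (acting on qubit $N$). Non-degeneracy assumptions (ND): $D:=(\prod_{j=1}^{N-1}\cos\alpha_j)^2+(\prod_{j=1}^{N-1}\sin\alpha_j)^2\neq0$, $D':=(\prod_{j=1}^{N-1}\cos\alpha_j')^2+(\prod_{j=1}^{N-1}\sin\alpha_j')^2\neq0$, and, if $N$ is odd, $\sin\alpha_N\neq0$ and $\sin\alpha_N'\neq0$. Two-qubit settings: with $\varepsilon=D^{-1/2}$, $\varepsilon'=D'^{-1/2}$, let $A_0=\vec{\mathrm n}_0\cdot\vec\sigma$ with $\vec{\mathrm n}_0=\varepsilon\big(\prod_{j=1}^{N-1}\sin\alpha_j\cos\beta,\ \prod_{j=1}^{N-1}\sin\alpha_j\sin\beta,\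 \prod_{j=1}^{N-1}\cos\alpha_j\big)$, $\beta=\sum_{j=1}^{N-1}\varphi_j$, and $A_1$ defined identically from the primed parameters (with $\varepsilon'$, $\beta'=\sum_{j=1}^{N-1}\varphi_j'$). If $N$ is even, $B_0=X_N$, $B_1=X_N'$; if $N$ is odd, $B_0=\cos\varphi_N\sigma_x+\sin\varphi_N\sigma_y$ and $B_1=\cos\varphi_N'\sigma_x+\sin\varphi_N'\sigma_y$. In $\langle\psi_+|A_a\otimes B_b|\psi_+\rangle$, $A_a$ acts on the first and $B_b$ on the second qubit. *)

From HB Require Import structures.
From mathcomp Require Import all_boot all_order all_algebra.
From mathcomp Require Import reals trigo.
From mathcomp Require Import complex mxtens.
Set Implicit Arguments. Unset Strict Implicit. Unset Printing Implicit Defensive.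
Import Order.TTheory GRing.Theory Num.Theory.
Local Open Scope ring_scope.
Local Open Scope complex_scope.

Fixpoint npow (p n : nat) : nat := match n with O => 1%N | S k => (npow p k * p)%N end.

Section Qubits.
Variable R : realType.
Local Notation C := R[i].

(* n-fold Kronecker product  F 1 ⊗ F 2 ⊗ ... ⊗ F n  (qubit 1 leftmost) *)
Fixpoint ntens {p q : nat} (F : nat -> 'M[C]_(p, q)) (n : nat) : 'M[C]_(npow p n, npow q n) :=
  match n with
  | O => 1%:M
  | S k => ntens F k *t F k.+1
  end.

Fixpoint ntensv (v : nat -> 'cV[C]_2) (n : nat) : 'cV[C]_(npow 2 n) :=
  match n with
  | O => 1%:M
  | S k => ntensv v k *t v k.+1
  end.

Definition sigma_x : 'M[C]_2 := \matrix_(i < 2, j < 2) (if i == j then 0 else 1).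
Definition sigma_y : 'M[C]_2 :=
  \matrix_(i < 2, j < 2)
    (if i == j then 0 else if (i == 0 :> nat) then - 'i else 'i).
Definition sigma_z : 'M[C]_2 :=
  \matrix_(i < 2, j < 2) (if i == j then (if (i == 0 :> nat) then 1 else -1) else 0).

Definition vec_sigma (x y z : R) : 'M[C]_2 :=
  x%:C *: sigma_x + y%:C *: sigma_y + z%:C *: sigma_z.

Definition qubit_obs (a f : R) : 'M[C]_2 :=
  vec_sigma (sin a * cos f) (sin a * sin f) (cos a).

Definition ket0 : 'cV[C]_2 := \col_(i < 2) (if (i == 0 :> nat) then 1 else 0).
Definition ket1 : 'cV[C]_2 := \col_(i < 2) (if (i == 0 :> nat) then 0 else 1).

Definition invsqrt2 : C := (Num.sqrt (2 : R))^-1%:C.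

(* N-qubit GHZ state (|0...0> + |1...1>)/sqrt 2, written with the bipartition
   (qubits 1..N-1) ⊗ (qubit N) *)
Definition GHZ (N : nat) : 'cV[C]_(npow 2 N.-1 * 2) :=
  invsqrt2 *: (ntensv (fun _ => ket0) N.-1 *t ket0 + ntensv (fun _ => ket1) N.-1 *t ket1).

Definition psi_plus : 'cV[C]_(2 * 2) := invsqrt2 *: (ket0 *t ket0 + ket1 *t ket1).

(* expectation value <psi| M |psi> (real part; it is real for Hermitian M) *)
Definition expect {d : nat} (psi : 'cV[C]_d) (M : 'M[C]_d) : R :=
  complex.Re ((((map_mx conjc psi)^T *m M *m psi) 0 0)).

(* multipartite settings  A_a = ⊗_{j=1}^{N-1} X_j (or X_j'),  B_b = X_N (or X_N') *)
Definition bbA (N : nat) (alpha phi : nat -> R) : 'M[C]_(npow 2 N.-1) :=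
  ntens (fun j => qubit_obs (alpha j) (phi j)) N.-1.
Definition bbB (N : nat) (alpha phi : nat -> R) : 'M[C]_2 :=
  qubit_obs (alpha N) (phi N).

Definition prod_sin (N : nat) (alpha : nat -> R) : R := \prod_(1 <= j < N) sin (alpha j).
Definition prod_cos (N : nat) (alpha : nat -> R) : R := \prod_(1 <= j < N) cos (alpha j).
Definition Dnd (N : nat) (alpha : nat -> R) : R :=
  prod_cos N alpha ^+ 2 + prod_sin N alpha ^+ 2.
Definition betasum (N : nat) (phi : nat -> R) : R := \sum_(1 <= j < N) phi j.

Definition A2 (N : nat) (alpha phi : nat -> R) : 'M[C]_2 :=
  let eps := (Num.sqrt (Dnd N alpha))^-1 in
  vec_sigma (eps * (prod_sin N alpha * cos (betasum N phi)))
            (eps * (prod_sin N alpha * sin (betasum N phi)))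
            (eps * prod_cos N alpha).
Definition B2 (N : nat) (alpha phi : nat -> R) : 'M[C]_2 :=
  if odd N then vec_sigma (cos (phi N)) (sin (phi N)) 0
  else qubit_obs (alpha N) (phi N).

Definition chsh {d1 d2 : nat} (psi : 'cV[C]_(d1 * d2))
  (A0 A1 : 'M[C]_d1) (B0 B1 : 'M[C]_d2) : R :=
  expect psi (A0 *t B0) + expect psi (A0 *t B1)
  + expect psi (A1 *t B0) - expect psi (A1 *t B1).

Definition I_N (N : nat) (alpha phi alpha' phi' : nat -> R) : R :=
  chsh (GHZ N) (bbA N alpha phi) (bbA N alpha' phi') (bbB N alpha phi) (bbB N alpha' phi').

Definition I_2 (N : nat) (alpha phi alpha' phi' : nat -> R) : R :=
  chsh psi_plus (A2 N alpha phi) (A2 N alpha' phi') (B2 N alpha phi) (B2 N alpha' phi').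

End Qubits.

From HB Require Import structures.
From mathcomp Require Import all_boot all_order all_algebra.
From mathcomp Require Import reals trigo complex mxtens.
From mathcomp Require Import ring lra.
Import Order.TTheory GRing.Theory Num.Theory.
Set Implicit Arguments. Unset Strict Implicit. Unset Printing Implicit Defensive.
Local Open Scope ring_scope.

(** The GHZ correlators factorise through the two-qubit ones:
    <G|A_a (x) B_b|G> = sqrt(D_a) q_b <psi_+|A_a (x) B_b|psi_+>, with
    q_b = sin(alpha_N) for odd N and q_b = 1 for even N.  Both factors lie in
    [0, 1], and the two-qubit correlators lie in [-1, 1] because A_a and B_b
    are spin observables along unit vectors.  A CHSH combination of
    correlators in [-1, 1] that is pushed beyond 2 in absolute value by such
    rescalings can only grow in absolute value when the rescalings are
    removed. *)

Lemma twisted_dot_le1 (R : realFieldType) (ax ay az bx by' bz : R) :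
  ax ^+ 2 + ay ^+ 2 + az ^+ 2 = 1 -> bx ^+ 2 + by' ^+ 2 + bz ^+ 2 = 1 ->
  `|ax * bx - ay * by' + az * bz| <= 1.
Proof.
move=> a1 b1; rewrite ler_norml.
have lagrange : (ax ^+ 2 + ay ^+ 2 + az ^+ 2) * (bx ^+ 2 + by' ^+ 2 + bz ^+ 2)
    - (ax * bx - ay * by' + az * bz) ^+ 2
  = (ax * by' + ay * bx) ^+ 2 + (ax * bz - az * bx) ^+ 2 + (ay * bz + az * by') ^+ 2.
  by ring.
rewrite a1 b1 mul1r in lagrange.
have := sqr_ge0 (ax * by' + ay * bx); have := sqr_ge0 (ax * bz - az * bx).
have := sqr_ge0 (ay * bz + az * by').
move: lagrange; set x := _ + az * bz => lagrange *.
have x2 : x ^+ 2 <= 1 by lra.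
by apply/andP; split; nra.
Qed.

Lemma sqr_prod_le1 (R : realDomainType) n (c s : nat -> R) :
  (forall j, c j ^+ 2 + s j ^+ 2 = 1) ->
  (\prod_(1 <= j < n.+2) c j) ^+ 2 + (\prod_(1 <= j < n.+2) s j) ^+ 2 <= 1.
Proof.
move=> cs1; elim: n => [|n IH]; first by rewrite !big_nat1 cs1.
rewrite big_nat_recr //= [X in _ + X ^+ 2]big_nat_recr //= !exprMn.
have := cs1 n.+2; have := sqr_ge0 (c n.+2); have := sqr_ge0 (s n.+2).
have := sqr_ge0 (\prod_(1 <= j < n.+2) c j); have := sqr_ge0 (\prod_(1 <= j < n.+2) s j).
nra.
Qed.

Section CHSHRescaling.
Variable R : realFieldType.

Lemma weighted_sum_le_sum (p q a b : R) :
  0 <= p <= 1 -> 0 <= q <= 1 -> `|a| <= 2 -> `|b| <= 2 ->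
  2 < p * a + q * b -> p * a + q * b <= a + b.
Proof.
move=> /andP[p0 p1] /andP[q0 q1] /ler_normlP[a0 a1] /ler_normlP[b0 b1] gt2.
have pa_le2 : p * a <= 2 by nra.
have qb_le2 : q * b <= 2 by nra.
have a_ge0 : 0 <= a by rewrite leNgt; apply/negP => a_lt0; nra.
have b_ge0 : 0 <= b by rewrite leNgt; apply/negP => b_lt0; nra.
nra.
Qed.

Lemma chsh_rescaled_gt2 (p0 p1 q0 q1 x00 x01 x10 x11 : R) :
  0 <= p0 <= 1 -> 0 <= p1 <= 1 -> 0 <= q0 <= 1 -> 0 <= q1 <= 1 ->
  `|x00| <= 1 -> `|x01| <= 1 -> `|x10| <= 1 -> `|x11| <= 1 ->
  let I := p0 * q0 * x00 + p0 * q1 * x01 + p1 * q0 * x10 - p1 * q1 * x11 in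
  2 < I -> I <= x00 + x01 + x10 - x11.
Proof.
move=> p0r p1r q0r q1r; have /andP[? ?] := q0r; have /andP[? ?] := q1r.
move=> /ler_normlP[? ?] /ler_normlP[? ?] /ler_normlP[? ?] /ler_normlP[? ?] I gt2.
have row0 : `|q0 * x00 + q1 * x01| <= 2 by apply/ler_normlP; split; nra.
have row1 : `|q0 * x10 - q1 * x11| <= 2 by apply/ler_normlP; split; nra.
have col0 : `|x00 + x10| <= 2 by apply/ler_normlP; split; lra.
have col1 : `|x01 - x11| <= 2 by apply/ler_normlP; split; lra.
(* Alice's factors p_a are removed first, row by row, then Bob's q_b column by column. *)
have alice_I : I = p0 * (q0 * x00 + q1 * x01) + p1 * (q0 * x10 - q1 * x11) by rewrite /I; ring.
rewrite alice_I in gt2 *.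
have alice := weighted_sum_le_sum p0r p1r row0 row1 gt2.
have bob_I : q0 * x00 + q1 * x01 + (q0 * x10 - q1 * x11) = q0 * (x00 + x10) + q1 * (x01 - x11).
  by ring.
rewrite bob_I in alice.
have := weighted_sum_le_sum q0r q1r col0 col1; lra.
Qed.

Lemma chsh_rescaled (p0 p1 q0 q1 x00 x01 x10 x11 : R) :
  0 <= p0 <= 1 -> 0 <= p1 <= 1 -> 0 <= q0 <= 1 -> 0 <= q1 <= 1 ->
  `|x00| <= 1 -> `|x01| <= 1 -> `|x10| <= 1 -> `|x11| <= 1 ->
  let I := p0 * q0 * x00 + p0 * q1 * x01 + p1 * q0 * x10 - p1 * q1 * x11 in
  let J := x00 + x01 + x10 - x11 in
  (2 < I -> I <= J) /\ (I < - 2 -> J <= I).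
Proof.
move=> p0r p1r q0r q1r x00r x01r x10r x11r I J; split; first exact: chsh_rescaled_gt2.
rewrite -!(normrN x00, normrN x01, normrN x10, normrN x11) in x00r x01r x10r x11r.
have := chsh_rescaled_gt2 p0r p1r q0r q1r x00r x01r x10r x11r.
rewrite /I /J /=; lra.
Qed.
End CHSHRescaling.

Section Braket.
Variable R : rcfType.
Local Notation C := R[i].

Definition bra {d : nat} (u : 'cV[C]_d) : 'rV[C]_d := (map_mx conjc u)^T.

Definition braket {d : nat} (u : 'cV[C]_d) (M : 'M[C]_d) (v : 'cV[C]_d) : C :=
  (bra u *m M *m v) 0 0.

Lemma tensmx11 (M N : 'M[C]_1) : (M *t N) 0 0 = M 0 0 * N 0 0.
Proof.
have -> : (0 : 'I_(1 * 1)) = mxtens_index (0, 0) by apply: val_inj.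
by rewrite tensmxE; congr (M _ _ * N _ _); apply: val_inj.
Qed.

Lemma bra_tens m p (u : 'cV[C]_m) (v : 'cV[C]_p) : bra (u *t v) = bra u *t bra v.
Proof. by apply/matrixP => i j; rewrite !mxE rmorphM. Qed.

Lemma braket_tens m p (u1 v1 : 'cV[C]_m) (u2 v2 : 'cV[C]_p) A B :
  braket (u1 *t u2) (A *t B) (v1 *t v2) = braket u1 A v1 * braket u2 B v2.
Proof.
rewrite /braket bra_tens [X in X *m _](tensmx_mul (bra u1) (bra u2) A B).
by rewrite (tensmx_mul (bra u1 *m A) (bra u2 *m B) v1 v2) tensmx11.
Qed.

Lemma braketDl d (u v w : 'cV[C]_d) M : braket (u + v) M w = braket u M w + braket v M w.
Proof. by rewrite /braket /bra map_mxD linearD /= !mulmxDl mxE. Qed.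

Lemma braketDr d (u v w : 'cV[C]_d) M : braket u M (v + w) = braket u M v + braket u M w.
Proof. by rewrite /braket !mulmxDr mxE. Qed.

Lemma braketZl d (u w : 'cV[C]_d) M c : braket (c *: u) M w = conjc c * braket u M w.
Proof. by rewrite /braket /bra map_mxZ linearZ /= -!scalemxAl mxE. Qed.

Lemma braketZr d (u w : 'cV[C]_d) M c : braket u M (c *: w) = c * braket u M w.
Proof. by rewrite /braket -!scalemxAr mxE. Qed.

Lemma braket_real_superposition m p (u0 u1 : 'cV[C]_m) (v0 v1 : 'cV[C]_p) A B (s : R) :
  let psi := s%:C%C *: (u0 *t v0 + u1 *t v1) in
  braket psi (A *t B) psi =
  (s ^+ 2)%:C%C * (braket u0 A u0 * braket v0 B v0 + braket u0 A u1 * braket v0 B v1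
     + braket u1 A u0 * braket v1 B v0 + braket u1 A u1 * braket v1 B v1).
Proof.
rewrite /= braketZl braketZr !braketDl !braketDr !braket_tens conjc_real.
by rewrite mulrA -rmorphM -expr2 !addrA.
Qed.

Lemma braket_delta d (X : 'M[C]_d) k l : braket (delta_mx k 0) X (delta_mx l 0) = X k l.
Proof.
rewrite /braket; have -> : bra (delta_mx k 0 : 'cV[C]_d) = delta_mx 0 k.
  by apply/matrixP => i j; rewrite !mxE; case: eqP; case: eqP => //=; simpc.
by rewrite -rowE -colE !mxE.
Qed.

End Braket.

Section Pauli.
Variable R : realType.
Local Notation C := R[i].

Definition expi (t : R) : C := (cos t +i* sin t)%C.

Lemma expi0 : expi 0 = 1.
Proof. by rewrite /expi cos0 sin0. Qed.

Lemma expiD a b : expi (a + b) = expi a * expi b.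
Proof. by rewrite /expi cosD sinD /=; simpc; rewrite [cos a * sin b + _]addrC. Qed.

Lemma prod_expi I (r : seq I) (P : pred I) (t : I -> R) :
  \prod_(i <- r | P i) expi (t i) = expi (\sum_(i <- r | P i) t i).
Proof. by rewrite (big_morph expi expiD expi0). Qed.

Lemma vec_sigma00 (x y z : R) : vec_sigma x y z 0 0 = z%:C%C.
Proof. by rewrite /vec_sigma !mxE /=; simpc. Qed.

Lemma vec_sigma01 (x y z : R) : vec_sigma x y z 0 1 = (x -i* y)%C.
Proof. by rewrite /vec_sigma !mxE /=; simpc. Qed.

Lemma vec_sigma10 (x y z : R) : vec_sigma x y z 1 0 = (x +i* y)%C.
Proof. by rewrite /vec_sigma !mxE /=; simpc. Qed.

Lemma vec_sigma11 (x y z : R) : vec_sigma x y z 1 1 = - z%:C%C.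
Proof. by rewrite /vec_sigma !mxE /=; simpc. Qed.

Lemma qubit_obs00 (a f : R) : qubit_obs a f 0 0 = (cos a)%:C%C.
Proof. exact: vec_sigma00. Qed.

Lemma qubit_obs01 (a f : R) : qubit_obs a f 0 1 = (sin a)%:C%C * expi (- f).
Proof. by rewrite /qubit_obs vec_sigma01 /expi cosN sinN /=; simpc. Qed.

Lemma qubit_obs10 (a f : R) : qubit_obs a f 1 0 = (sin a)%:C%C * expi f.
Proof. by rewrite /qubit_obs vec_sigma10 /expi /=; simpc. Qed.

Lemma qubit_obs11 (a f : R) : qubit_obs a f 1 1 = - (cos a)%:C%C.
Proof. exact: vec_sigma11. Qed.

Lemma prod_qubit_obs00 N (al ph : nat -> R) :
  \prod_(1 <= j < N) qubit_obs (al j) (ph j) 0 0 = (prod_cos N al)%:C%C.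
Proof. by under eq_bigr do rewrite qubit_obs00; rewrite rmorph_prod. Qed.

Lemma prod_qubit_obs01 N (al ph : nat -> R) :
  \prod_(1 <= j < N) qubit_obs (al j) (ph j) 0 1 =
  (prod_sin N al)%:C%C * expi (- betasum N ph).
Proof.
under eq_bigr do rewrite qubit_obs01.
by rewrite big_split /= rmorph_prod prod_expi /betasum sumrN.
Qed.

Lemma prod_qubit_obs10 N (al ph : nat -> R) :
  \prod_(1 <= j < N) qubit_obs (al j) (ph j) 1 0 =
  (prod_sin N al)%:C%C * expi (betasum N ph).
Proof.
under eq_bigr do rewrite qubit_obs10.
by rewrite big_split /= rmorph_prod prod_expi.
Qed.

Lemma prod_qubit_obs11 N (al ph : nat -> R) :
  \prod_(1 <= j < N) qubit_obs (al j) (ph j) 1 1 = ((-1) ^+ N.-1 * prod_cos N al)%:C%C.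
Proof.
under eq_bigr do rewrite qubit_obs11 -mulN1r.
by rewrite big_split /= prodr_const_nat subn1 rmorphM rmorphXn rmorphN1 rmorph_prod.
Qed.

Lemma ket0_delta : ket0 R = delta_mx 0 0.
Proof. by apply/matrixP => i j; rewrite !mxE ord1 andbT; case: i => [[|[|]]]. Qed.

Lemma ket1_delta : ket1 R = delta_mx 1 0.
Proof. by apply/matrixP => i j; rewrite !mxE ord1 andbT; case: i => [[|[|]]]. Qed.

End Pauli.

Section Correlations.
Variable R : realType.
Local Notation C := R[i].
Local Notation Re := (@complex.Re R).

Lemma Re_realM (k : R) (z : C) : Re (k%:C%C * z) = k * Re z.
Proof. by case: z => a b /=; simpc. Qed.

Lemma expectE d (psi : 'cV[C]_d) M : expect psi M = Re (braket psi M psi).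
Proof. by []. Qed.

Lemma braket_ntens (F : nat -> 'M[C]_2) f g n :
  braket (ntensv f n) (ntens F n) (ntensv g n) =
  \prod_(1 <= j < n.+1) braket (f j) (F j) (g j).
Proof.
elim: n => [|n IH]; last by rewrite /= braket_tens IH [RHS]big_nat_recr.
by rewrite big_geq // /braket /bra !mulmx1 !mxE /=; simpc.
Qed.

Lemma braket_ntens_delta (F : nat -> 'M[C]_2) n k l :
  braket (ntensv (fun=> delta_mx k 0) n) (ntens F n) (ntensv (fun=> delta_mx l 0) n) =
  \prod_(1 <= j < n.+1) F j k l.
Proof. by rewrite braket_ntens; apply: eq_bigr => j _; rewrite braket_delta. Qed.

Lemma expect_GHZ_tens n (F : nat -> 'M[C]_2) (B : 'M[C]_2) :
  expect (GHZ R n.+1) (ntens F n *t B) =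
  Re (\prod_(1 <= j < n.+1) F j 0 0 * B 0 0 + \prod_(1 <= j < n.+1) F j 0 1 * B 0 1
    + \prod_(1 <= j < n.+1) F j 1 0 * B 1 0 + \prod_(1 <= j < n.+1) F j 1 1 * B 1 1) / 2.
Proof.
rewrite expectE /GHZ /invsqrt2 ket0_delta ket1_delta braket_real_superposition.
by rewrite !braket_ntens_delta !braket_delta Re_realM exprVn sqr_sqrtr // mulrC.
Qed.

Lemma expect_psi_plus_tens (A B : 'M[C]_2) :
  expect (psi_plus R) (A *t B) =
  Re (A 0 0 * B 0 0 + A 0 1 * B 0 1 + A 1 0 * B 1 0 + A 1 1 * B 1 1) / 2.
Proof.
rewrite expectE /psi_plus /invsqrt2 ket0_delta ket1_delta braket_real_superposition.
by rewrite !braket_delta Re_realM exprVn sqr_sqrtr // mulrC.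
Qed.

(* [vec_sigma] is generalised before its entries are rewritten: otherwise each
   failed match unfolds it down to its finfun, which takes minutes. *)
Lemma expect_GHZ n (al ph : nat -> R) (bx by' bz : R) :
  expect (GHZ R n.+1) (bbA n.+1 al ph *t vec_sigma bx by' bz) =
  (if odd n then prod_cos n.+1 al * bz else 0)
  + prod_sin n.+1 al * (cos (betasum n.+1 ph) * bx - sin (betasum n.+1 ph) * by').
Proof.
rewrite expect_GHZ_tens prod_qubit_obs00 prod_qubit_obs01 prod_qubit_obs10.
rewrite prod_qubit_obs11 /expi.
move: (vec_sigma00 bx by' bz) (vec_sigma01 bx by' bz).
move: (vec_sigma10 bx by' bz) (vec_sigma11 bx by' bz).
move: (vec_sigma bx by' bz) => B -> -> -> -> /=.
simpc; rewrite cosN sinN -signr_odd.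
by case: (odd n); field.
Qed.

Lemma expect_psi_plus (ax ay az bx by' bz : R) :
  expect (psi_plus R) (vec_sigma ax ay az *t vec_sigma bx by' bz) =
  ax * bx - ay * by' + az * bz.
Proof.
rewrite expect_psi_plus_tens.
move: (vec_sigma00 ax ay az) (vec_sigma01 ax ay az).
move: (vec_sigma10 ax ay az) (vec_sigma11 ax ay az).
move: (vec_sigma00 bx by' bz) (vec_sigma01 bx by' bz).
move: (vec_sigma10 bx by' bz) (vec_sigma11 bx by' bz).
move: (vec_sigma ax ay az) (vec_sigma bx by' bz) => A B -> -> -> -> -> -> -> -> /=.
by simpc; field.
Qed.

Lemma expect_psi_plus_le1 (ax ay az bx by' bz : R) :
  ax ^+ 2 + ay ^+ 2 + az ^+ 2 = 1 -> bx ^+ 2 + by' ^+ 2 + bz ^+ 2 = 1 ->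
  `|expect (psi_plus R) (vec_sigma ax ay az *t vec_sigma bx by' bz)| <= 1.
Proof. by rewrite expect_psi_plus; apply: twisted_dot_le1. Qed.

Lemma Dnd_ge0 N (al : nat -> R) : 0 <= Dnd N al.
Proof. by rewrite addr_ge0 ?sqr_ge0. Qed.

Lemma sqrt_Dnd_neq0 N (al : nat -> R) : Dnd N al != 0 -> Num.sqrt (Dnd N al) != 0.
Proof. by rewrite sqrtr_eq0 -ltNge lt_def => ->; rewrite Dnd_ge0. Qed.

Lemma expect_GHZ_factor n (al ph bl bp : nat -> R) : Dnd n.+1 al != 0 ->
  expect (GHZ R n.+1) (bbA n.+1 al ph *t bbB n.+1 bl bp) =
  Num.sqrt (Dnd n.+1 al) * (if odd n.+1 then sin (bl n.+1) else 1) *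
  expect (psi_plus R) (A2 n.+1 al ph *t B2 n.+1 bl bp).
Proof.
move=> /sqrt_Dnd_neq0 sqrtD0.
rewrite /bbB /qubit_obs expect_GHZ /A2 /B2 /=.
by case: (odd n); rewrite /= expect_psi_plus; field.
Qed.

Lemma sqr_cos_sin_unit (a f : R) :
  (sin a * cos f) ^+ 2 + (sin a * sin f) ^+ 2 + cos a ^+ 2 = 1.
Proof. by rewrite !exprMn -mulrDr cos2Dsin2 mulr1 addrC cos2Dsin2. Qed.

Lemma expect_psi_plus_A2B2_le1 N (al ph bl bp : nat -> R) : Dnd N al != 0 ->
  `|expect (psi_plus R) (A2 N al ph *t B2 N bl bp)| <= 1.
Proof.
move=> D0.
have A2_unit : let eps := (Num.sqrt (Dnd N al))^-1 in
    (eps * (prod_sin N al * cos (betasum N ph))) ^+ 2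
  + (eps * (prod_sin N al * sin (betasum N ph))) ^+ 2 + (eps * prod_cos N al) ^+ 2 = 1.
  rewrite /= !exprMn -!mulrDr cos2Dsin2 mulr1 exprVn sqr_sqrtr.
    by rewrite [_ + prod_cos _ _ ^+ 2]addrC -/(Dnd N al) mulVf.
  exact: Dnd_ge0.
rewrite /A2 /B2; case: ifP => _; apply: expect_psi_plus_le1 => //.
  by rewrite expr0n /= addr0 cos2Dsin2.
exact: sqr_cos_sin_unit.
Qed.

Lemma sqrt_Dnd_range N (al : nat -> R) : (1 < N)%N -> 0 <= Num.sqrt (Dnd N al) <= 1.
Proof.
case: N => [|[|n]] // _; rewrite sqrtr_ge0 -sqrtr1 ler_wsqrtr //.
by rewrite /Dnd; apply: sqr_prod_le1 => j; exact: cos2Dsin2.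
Qed.

Lemma bob_factor_range N (bl : nat -> R) : 0 <= bl N <= pi ->
  0 <= (if odd N then sin (bl N) else 1) <= 1.
Proof.
by case: ifP => _ blN; rewrite ?ler01 ?lexx // sin_le1 sin_ge0_pi.
Qed.
End Correlations.

Lemma chsh_rescaled_expect (R : realType) d1 d2 e1 e2
    (psi : 'cV[R[i]]_(d1 * d2)) (phi : 'cV[R[i]]_(e1 * e2))
    (A : bool -> 'M[R[i]]_d1) (B : bool -> 'M[R[i]]_d2)
    (A' : bool -> 'M[R[i]]_e1) (B' : bool -> 'M[R[i]]_e2) (p q : bool -> R) :
  (forall a, 0 <= p a <= 1) -> (forall b, 0 <= q b <= 1) ->
  (forall a b, `|expect phi (A' a *t B' b)| <= 1) ->
  (forall a b, expect psi (A a *t B b) = p a * q b * expect phi (A' a *t B' b)) ->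
  let I := chsh psi (A false) (A true) (B false) (B true) in
  let J := chsh phi (A' false) (A' true) (B' false) (B' true) in
  (2 < I -> I <= J) /\ (I < - 2 -> J <= I).
Proof. by move=> p01 q01 E'_le1 E_factor; rewrite /chsh !E_factor; apply: chsh_rescaled. Qed.

Theorem theorem1 (R : realType) (N : nat) (alpha phi alpha' phi' : nat -> R) :
  (3 <= N)%N ->
  (forall j, (1 <= j <= N)%N -> 0 <= alpha j <= pi) ->
  (forall j, (1 <= j <= N)%N -> 0 <= alpha' j <= pi) ->
  Dnd N alpha != 0 -> Dnd N alpha' != 0 ->
  (odd N -> sin (alpha N) != 0 /\ sin (alpha' N) != 0) ->
  (2 < I_N N alpha phi alpha' phi' ->
     I_N N alpha phi alpha' phi' <= I_2 N alpha phi alpha' phi') /\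
  (I_N N alpha phi alpha' phi' < - 2 ->
     I_2 N alpha phi alpha' phi' <= I_N N alpha phi alpha' phi').
Proof.
move=> N_ge3 alpha_range alpha'_range D0 D0' _.
have N_gt1 : (1 < N)%N by apply: leq_trans N_ge3.
have N_range : (1 <= N <= N)%N by rewrite leqnn andbT ltnW.
have alphaN := alpha_range N N_range; have alpha'N := alpha'_range N N_range.
case: N {N_ge3 N_range alpha_range alpha'_range} N_gt1 D0 D0' alphaN alpha'N => // n.
move=> N_gt1 D0 D0' alphaN alpha'N.
pose al a := if a then alpha' else alpha; pose ph a := if a then phi' else phi.
apply: (chsh_rescaled_expect (A := fun a => bbA n.+1 (al a) (ph a))
  (B := fun b => bbB n.+1 (al b) (ph b)) (A' := fun a => A2 n.+1 (al a) (ph a))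
  (B' := fun b => B2 n.+1 (al b) (ph b))
  (p := fun a => Num.sqrt (Dnd n.+1 (al a)))
  (q := fun b => if odd n.+1 then sin (al b n.+1) else 1)).
- by case; apply: sqrt_Dnd_range.
- by case; apply: bob_factor_range.
- by case=> b; apply: expect_psi_plus_A2B2_le1.
- by case=> b; apply: expect_GHZ_factor.
Qed.
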